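(* Let $\mathcal{M}=((X,\mathcal{C}),\mathcal{V})$ be a closure model and $(X,\eta)$ its associated closure coalgebra. Then for all $x,y\in X$: $x\equiv_{IML}y$ if and only if $x$ and $y$ are behaviourally equivalent in $(X,\eta)$, i.e. there exist a $\mathbf{C}$-coalgebra $(Y,\theta)$ and a coalgebra homomorphism $f:(X,\eta)\to(Y,\theta)$ with $f(x)=f(y)$.
   Context: Closure space $(X,\mathcal{C})$: $X$ non-empty, $\mathcal{C}:\mathcal{P}(X)\to\mathcal{P}(X)$ with $\mathcal{C}(\emptyset)=\emptyset$, $A\subseteq\mathcal{C}(A)$, $\mathcal{C}(A_1\cup A_2)=\mathcal{C}(A_1)\cup\mathcal{C}(A_2)$; closure model adds $\mathcal{V}:AP\to\mathcal{P}(X)$, $\mathcal{V}^{-1}(x)=\{p\mid x\in\mathcal{V}(p)\}$. IML formulas: $\Phi::=p\mid\neg\Phi\mid\bigwedge_{i\in I}\Phi_i\mid\mathcal{N}\Phi$ ($I$ any set); $x\models p$ iff $x\in\mathcal{V}(p)$, negation and conjunction standard, $x\models\mathcal{N}\Phi$ iff $x\in\mathcal{C}(\{y\mid y\models\Phi\})$; $\equiv_{IML}$ means satisfying the same IML formulas. Closure functor $\mathbf{C}X=\mathcal{P}(AP)\times\mathcal{P}(\mathcal{P}(X))$ with $\mathbf{C}f(v,S)=(v,\{f[A]\mid A\in S\})$ (covariant powerset, $f[A]$ the direct image). Associated closure coalgebra: $\eta(x)=(\mathcal{V}^{-1}(x),\{A\subseteq X\mid x\in\mathcal{C}(A)\})$.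 A homomorphism $f:(X,\eta)\to(Y,\theta)$ satisfies $\theta\circ f=(\mathbf{C}f)\circ\eta$. *)

Set Implicit Arguments.

Definition set (T : Type) := T -> Prop.
Definition set0 {T : Type} : set T := fun _ => False.
Definition setU {T : Type} (A B : set T) : set T := fun x => A x \/ B x.
Definition subset {T : Type} (A B : set T) : Prop := forall x, A x -> B x.

Record closure_space (X : Type) := {
  cl : set X -> set X;
  cl_nonempty : exists x : X, True;
  cl_empty : forall x, cl set0 x <-> set0 x;
  cl_extensive : forall A, subset A (cl A);
  cl_union : forall A1 A2 x, cl (setU A1 A2) x <-> setU (cl A1) (cl A2) x
}.

Record closure_model (AP X : Type) := {
  cspace : closure_space X;
  val : AP -> set X
}.

Inductive iml (AP : Type) : Type :=
| Atom : AP -> iml AP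
| Neg : iml AP -> iml AP
| BigAnd : forall (I : Type), (I -> iml AP) -> iml AP
| Near : iml AP -> iml AP.

Fixpoint sat {AP X : Type} (M : closure_model AP X) (x : X) (phi : iml AP) : Prop :=
  match phi with
  | Atom p => val M p x
  | Neg phi' => ~ sat M x phi'
  | @BigAnd _ J phis => forall i : J, sat M x (phis i)
  | Near phi' => cl (cspace M) (fun y => sat M y phi') x
  end.

Definition iml_equiv {AP X : Type} (M : closure_model AP X) (x y : X) : Prop :=
  forall phi : iml AP, sat M x phi <-> sat M y phi.

Definition CF (AP X : Type) : Type := (set AP * set (set X))%type.

Definition image {X Y : Type} (f : X -> Y) (A : set X) : set Y :=
  fun y => exists a, A a /\ f a = y.

Definition CF_map {AP X Y : Type} (f : X -> Y) (c : CF AP X) : CF AP Y :=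
  (fst c, fun B : set Y => exists A : set X, snd c A /\ B = image f A).

Definition eta {AP X : Type} (M : closure_model AP X) (x : X) : CF AP X :=
  (fun p => val M p x, fun A => cl (cspace M) A x).

Definition is_hom {AP X Y : Type} (eta0 : X -> CF AP X) (theta : Y -> CF AP Y)
  (f : X -> Y) : Prop :=
  forall x, theta (f x) = CF_map f (eta0 x).

Definition behav_equiv {AP X : Type} (M : closure_model AP X) (x y : X) : Prop :=
  exists (Y : Type) (theta : Y -> CF AP Y) (f : X -> Y),
    is_hom (eta M) theta f /\ f x = f y.

From Stdlib Require Import Classical ClassicalEpsilon FunctionalExtensionality PropExtensionality.

(* Soundness: a coalgebra homomorphism f : (X, eta) -> (Y, theta) determines,
   through theta (f x), both the atoms true at x and the images under f of the
   sets whose closure contains x.  Hence, by induction on formulas, points with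
   the same image under f satisfy the same IML formulas; the neighbourhood case
   uses monotonicity of the closure operator, a consequence of additivity.

   Completeness: we build the quotient coalgebra on IML-equivalence classes.
   Infinitary conjunctions let us write, for every point w, a characteristic
   formula true exactly on the class of w, and for every set A a formula true
   exactly on the saturation of A (its closure under IML equivalence).  Since
   A and its saturation have the same image in the quotient, and membership in
   the closure of the saturation is expressed by a Near-formula, the quotient
   map is a homomorphism identifying exactly the IML-equivalent points. *)

Lemma set_ext {T : Type} (A B : set T) : (forall z, A z <-> B z) -> A = B.
Proof.
  intro H; apply functional_extensionality; intro z.
  apply propositional_extensionality; auto.
Qed.

Lemma cl_mono {X : Type} (C : closure_space X) (A B : set X) (x : X) :
  subset A B -> cl C A x -> cl C B x.
Proof.
  intros HAB HA.
  assert (HU : setU A B = B).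
  { apply set_ext; intro z; unfold setU; split; auto. intros [h | h]; auto. }
  rewrite <- HU. apply (cl_union C). left; exact HA.
Qed.

Section Soundness.
Variables (AP X Y : Type) (M : closure_model AP X).
Variables (theta : Y -> CF AP Y) (f : X -> Y).
Hypothesis f_hom : is_hom (eta M) theta f.

Lemma hom_same_atoms (a b : X) (p : AP) :
  f a = f b -> val M p a -> val M p b.
Proof.
  intros Hab Hp.
  assert (E : (fun q => val M q a) = (fun q => val M q b)).
  { change (fst (CF_map f (eta M a)) = fst (CF_map f (eta M b))).
    rewrite <- !f_hom, Hab; reflexivity. }
  exact (eq_ind _ (fun g => g p) Hp _ E).
Qed.

Lemma hom_same_neighbourhoods (a b : X) (A : set X) :
  f a = f b -> cl (cspace M) A a ->
  exists B, cl (cspace M) B b /\ image f A = image f B.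
Proof.
  intros Hab HA.
  assert (Hs : snd (CF_map f (eta M b)) (image f A)).
  { rewrite <- f_hom, <- Hab, f_hom. exists A; split; auto. }
  destruct Hs as [B [HB E]]. exists B; auto.
Qed.

Lemma hom_preserves_sat (phi : iml AP) :
  forall a b, f a = f b -> sat M a phi -> sat M b phi.
Proof.
  induction phi as [p | phi IH | I phis IH | phi IH]; intros a b Hab; simpl.
  - apply hom_same_atoms; exact Hab.
  - intros Hna Hb. apply Hna. exact (IH b a (eq_sym Hab) Hb).
  - intros Ha i. exact (IH i a b Hab (Ha i)).
  - intro Ha.
    destruct (hom_same_neighbourhoods _ _ _ Hab Ha) as [B [HB E]].
    apply (cl_mono (cspace M) B); auto.
    intros w Hw.
    assert (Hi : image f (fun z => sat M z phi) (f w)) by (rewrite E; exists w; auto).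
    destruct Hi as [z [Hz Hzw]]. exact (IH z w Hzw Hz).
Qed.
End Soundness.

Arguments hom_preserves_sat {AP X Y M theta f}.

Lemma behav_equiv_iml_equiv (AP X : Type) (M : closure_model AP X) (x y : X) :
  behav_equiv M x y -> iml_equiv M x y.
Proof.
  intros [Y [theta [f [Hf Hxy]]]] phi. split.
  - exact (hom_preserves_sat Hf phi x y Hxy).
  - exact (hom_preserves_sat Hf phi y x (eq_sym Hxy)).
Qed.

Definition BigOr {AP I : Type} (phis : I -> iml AP) : iml AP :=
  Neg (BigAnd (fun i => Neg (phis i))).

Lemma sat_BigOr {AP X I : Type} (M : closure_model AP X)
    (phis : I -> iml AP) (u : X) :
  sat M u (BigOr phis) <-> exists i, sat M u (phis i).
Proof.
  simpl. split.
  - intro h. apply NNPP. intro hn. apply h. intros i hi. apply hn. exists i; exact hi.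
  - intros [i hi] h. exact (h i hi).
Qed.

Section Completeness.
Variables (AP X : Type) (M : closure_model AP X).

Notation "a ≡ b" := (iml_equiv M a b) (at level 70).

Lemma iml_equiv_refl (a : X) : a ≡ a.
Proof. intro; tauto. Qed.

Lemma iml_equiv_sym {a b : X} : a ≡ b -> b ≡ a.
Proof. intros H phi; specialize (H phi); tauto. Qed.

Lemma iml_equiv_trans {a b c : X} : a ≡ b -> b ≡ c -> a ≡ c.
Proof. intros H1 H2 phi; specialize (H1 phi); specialize (H2 phi); tauto. Qed.

Lemma separating_formula {w z : X} :
  ~ w ≡ z -> exists phi, sat M w phi /\ ~ sat M z phi.
Proof.
  intro Hn. apply not_all_ex_not in Hn. destruct Hn as [phi Hphi].
  destruct (classic (sat M w phi)) as [h | h].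
  - exists phi; split; auto. intro h'; apply Hphi; tauto.
  - exists (Neg phi); simpl; split; auto.
    intro h'; apply Hphi; tauto.
Qed.

Local Definition iml_inhabited : inhabited (iml AP) :=
  inhabits (@BigAnd AP False (fun h => False_rect _ h)).

(* A chosen separating formula (arbitrary when w and z are equivalent). *)
Definition separator (w z : X) : iml AP :=
  epsilon iml_inhabited (fun phi => sat M w phi /\ ~ sat M z phi).

Lemma separator_spec {w z : X} :
  ~ w ≡ z -> sat M w (separator w z) /\ ~ sat M z (separator w z).
Proof. intro Hn. unfold separator. apply epsilon_spec, separating_formula, Hn. Qed.

Definition characteristic (w : X) : iml AP :=
  @BigAnd AP {z : X | ~ w ≡ z} (fun z => separator w (proj1_sig z)).

Lemma sat_characteristic (w u : X) : sat M u (characteristic w) <-> w ≡ u.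
Proof.
  simpl. split.
  - intro Hu. apply NNPP. intro Hn.
    apply (proj2 (separator_spec Hn)). exact (Hu (exist _ u Hn)).
  - intros E [z Hz]. simpl. apply (E (separator w z)), separator_spec, Hz.
Qed.

Definition saturation (A : set X) : set X := fun z => exists w, A w /\ w ≡ z.

Lemma saturation_definable (A : set X) :
  saturation A = (fun u => sat M u (BigOr (fun w : {w | A w} => characteristic (proj1_sig w)))).
Proof.
  apply set_ext; intro u. rewrite sat_BigOr. split.
  - intros [w [Hw E]]. exists (exist _ w Hw). apply sat_characteristic, E.
  - intros [[w Hw] Hu]. exists w. split; auto. apply (sat_characteristic w u), Hu.
Qed.

Lemma cl_saturation_invariant (A : set X) {a b : X} :
  a ≡ b -> cl (cspace M) (saturation A) a -> cl (cspace M) (saturation A) b.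
Proof.
  intro E. rewrite saturation_definable.
  exact (proj1 (E (Near (BigOr (fun w : {w | A w} => characteristic (proj1_sig w)))))).
Qed.

Definition class (a : X) : set X := fun z => a ≡ z.

Lemma class_eq_iff {a b : X} : class a = class b <-> a ≡ b.
Proof.
  split.
  - intro E. change (class a b). rewrite E. apply iml_equiv_refl.
  - intro E. apply set_ext; intro z; unfold class; split; intro h.
    + exact (iml_equiv_trans (iml_equiv_sym E) h).
    + exact (iml_equiv_trans E h).
Qed.

Lemma image_class_saturation (A : set X) :
  image class (saturation A) = image class A.
Proof.
  apply set_ext; intro c; split.
  - intros [z [[w [Hw E]] Hc]]. exists w; split; auto.
    rewrite <- Hc. apply class_eq_iff, E.
  - intros [w [Hw Hc]]. exists w; split; auto. exists w; split; auto.
    apply iml_equiv_refl.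
Qed.

Definition quotient_coalgebra (c : set X) : CF AP (set X) :=
  (fun p => exists a, c = class a /\ val M p a,
   fun B => exists a, c = class a /\ exists A, cl (cspace M) A a /\ B = image class A).

Lemma class_hom : is_hom (eta M) quotient_coalgebra class.
Proof.
  intro a. unfold quotient_coalgebra, CF_map, eta; simpl. f_equal.
  - apply set_ext; intro p; split.
    + intros [a' [Ea Hv]]. apply class_eq_iff in Ea. exact (proj2 (Ea (Atom p)) Hv).
    + intro h. exists a; split; auto.
  - apply set_ext; intro B; split.
    + intros [a' [Ea [A [HA ->]]]]. apply class_eq_iff in Ea.
      exists (saturation A). split.
      * apply (cl_saturation_invariant A (iml_equiv_sym Ea)).
        apply (cl_mono (cspace M) A); auto.
        intros w Hw. exists w; split; auto. apply iml_equiv_refl.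
      * symmetry; apply image_class_saturation.
    + intros [A [HA HB]]. exists a; split; auto. exists A; auto.
Qed.

Lemma iml_equiv_behav_equiv (x y : X) : x ≡ y -> behav_equiv M x y.
Proof.
  intro E. exists (set X), quotient_coalgebra, class. split.
  - exact class_hom.
  - apply class_eq_iff, E.
Qed.
End Completeness.

Theorem theorem4 (AP X : Type) (M : closure_model AP X) (x y : X) :
  iml_equiv M x y <-> behav_equiv M x y.
Proof.
  split.
  - apply iml_equiv_behav_equiv.
  - apply behav_equiv_iml_equiv.
Qed.
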